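(* Let $N\geq3$ and let $(M,g)$ be an $N$-dimensional Riemannian model with pole $o$ and metric $ds^2=dr^2+\psi^2(r)\,d\omega^2$, where $\psi$ is a $C^\infty$ nonnegative function on $[0,+\infty)$, positive on $(0,+\infty)$, with $\psi'(0)=1$, $\psi^{(2k)}(0)=0$ for all $k\geq0$, and such that $\psi(r)=Ae^{br^{a+1}}$ for $r\geq R$, for some $R,A,b>0$ and $a\geq0$. Then for all $u\in C_c^\infty(M\setminus B_R(o))$, $$\int_M\Big(\frac{\partial u}{\partial r}\Big)^2dv_g\geq\Big(\frac{N-1}{2}\Big)^2(a+1)^2b^2\int_M r^{2a}u^2dv_g+\frac14\int_M\frac{u^2}{r^2}dv_g+\frac{2ba(a+1)(N-1)}{4}\int_M r^{a-1}u^2dv_g.$$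
   Context: $d\omega^2$ is the standard metric on $\mathbb{S}^{N-1}$, $r$ the geodesic distance from $o$, $B_R(o)$ the geodesic ball of radius $R$ centered at $o$, $\frac{\partial u}{\partial r}$ the radial derivative, $dv_g$ the Riemannian volume. *)

From HB Require Import structures.
From mathcomp Require Import all_boot all_order all_algebra.
From mathcomp Require Import all_classical all_reals all_analysis.
Set Implicit Arguments. Unset Strict Implicit. Unset Printing Implicit Defensive.
Import Order.TTheory GRing.Theory Num.Theory.
Import numFieldNormedType.Exports.
Local Open Scope classical_set_scope.
Local Open Scope ring_scope.

Definition smooth_on (R : realType) (f : R -> R) (A : set R) : Prop :=
  forall (n : nat) (x : R), A x -> derivable (derive1n n f) x 1.

(* Integral over the Riemannian model M \ {o} written in polar coordinates
   (r, w) in (0,+oo) x Omega, with volume dv_g = psi(r)^(N-1) dr dsigma(w):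
   int_M f dv_g = int_Omega ( int_0^oo f(r,w) psi(r)^(N-1) dr ) dsigma(w). *)
Definition model_integral (R : realType) (d : measure_display)
  (Omega : measurableType d) (sigma : {measure set Omega -> \bar R})
  (N : nat) (psi : R -> R) (f : R -> Omega -> R) : \bar R :=
  (\int[sigma]_(w in [set: Omega])
     \int[@lebesgue_measure R]_(r in `]0%R, +oo[%classic)
        ((f r w) * psi r ^+ N.-1)%:E)%E.

From HB Require Import structures.
From mathcomp Require Import all_boot all_order all_algebra.
From mathcomp Require Import all_classical all_reals all_analysis.
From mathcomp Require Import ring lra measurable_realfun.
Import Order.TTheory GRing.Theory Num.Theory.
Import numFieldNormedType.Exports.
Local Open Scope classical_set_scope.
Local Open Scope ring_scope.

(* Ground-state substitution in the radial variable, one direction w at a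
   time.  On the support of u the weight is e(r) = psi(r)^(N-1) =
   (A exp(b r^(a+1)))^(N-1), so e' = 2 k r^a e with k = (N-1)(a+1)b/2.  For
   g(r) = k r^a - 1/(2r), expanding 0 <= e (v' + g v)^2 and integrating away
   the exact derivative (g e v^2)' gives
     int v'^2 e >= int (g' + 2 k r^a g - g^2) v^2 e
                 = int (k^2 r^(2a) + 1/(4 r^2) + k a r^(a-1)) v^2 e,
   which is the claimed inequality along each ray; Tonelli then integrates it
   over the sphere. *)

Section RealFunctions.
Context {R : realType}.

Lemma is_derive1_continuous {f : R -> R} {x df : R} :
  is_derive x 1 f df -> {for x, continuous f}.
Proof.
by move=> fx; apply/differentiable_continuous/derivable1_diffP; exact: ex_derive.
Qed.

Lemma continuous_exprn {f : R -> R} {x : R} (n : nat) :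
  {for x, continuous f} -> {for x, continuous (fun y => f y ^+ n)}.
Proof. by move=> cf; have := continuous_comp cf (@exprn_continuous R n (f x)). Qed.

Lemma continuous_powR_gt0 (c x : R) : 0 < x -> {for x, continuous (fun y => y `^ c)}.
Proof. by move=> x0; have := is_derive1_continuous (is_derive1_powR c x0). Qed.

Lemma segment_continuous_integrable {lo hi : R} {f : R -> R} :
  (forall x, lo <= x <= hi -> {for x, continuous f}) ->
  lebesgue_measure.-integrable `[lo, hi] (EFin \o f).
Proof.
move=> cf; apply: continuous_compact_integrable; first exact: segment_compact.
by apply: continuous_subspace_itv => x; rewrite in_itv => /cf.
Qed.

End RealFunctions.

Section Lincomb.
Context {d : measure_display} {T : measurableType d} {R : realType}.
Variables (mu : {measure set T -> \bar R}) (D : set T).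
Hypothesis mD : measurable D.

Lemma integral_lincomb3 (f1 f2 f3 : T -> R) (c1 c2 c3 : R) :
  mu.-integrable D (EFin \o f1) -> mu.-integrable D (EFin \o f2) ->
  mu.-integrable D (EFin \o f3) ->
  (\int[mu]_(x in D) (c1 * f1 x + c2 * f2 x + c3 * f3 x)%:E
   = c1%:E * \int[mu]_(x in D) (f1 x)%:E + c2%:E * \int[mu]_(x in D) (f2 x)%:E
     + c3%:E * \int[mu]_(x in D) (f3 x)%:E)%E.
Proof.
move=> i1 i2 i3; rewrite -!integralZl // -!integralD //.
all: by do ?apply: integrableD => //; exact: integrableZl.
Qed.

Lemma ge0_le_integral_lincomb3 (f0 f1 f2 f3 : T -> \bar R) (c1 c2 c3 : R) :
  0 <= c1 -> 0 <= c2 -> 0 <= c3 ->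
  (forall x, D x -> 0 <= f1 x)%E -> (forall x, D x -> 0 <= f2 x)%E ->
  (forall x, D x -> 0 <= f3 x)%E ->
  measurable_fun D f0 -> measurable_fun D f1 -> measurable_fun D f2 ->
  measurable_fun D f3 ->
  (forall x, D x -> c1%:E * f1 x + c2%:E * f2 x + c3%:E * f3 x <= f0 x)%E ->
  (c1%:E * \int[mu]_(x in D) f1 x + c2%:E * \int[mu]_(x in D) f2 x
   + c3%:E * \int[mu]_(x in D) f3 x <= \int[mu]_(x in D) f0 x)%E.
Proof.
move=> c1_ge0 c2_ge0 c3_ge0 f1_ge0 f2_ge0 f3_ge0 mf0 mf1 mf2 mf3 f0_ge.
have cf_ge0 (c : R) f : 0 <= c -> (forall x, D x -> 0 <= f x)%E ->
  forall x, D x -> (0 <= c%:E * f x)%E.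
  by move=> c0 f_ge0 x Dx; rewrite mule_ge0 ?lee_fin ?f_ge0.
have mcf (c : R) f : measurable_fun D f -> measurable_fun D (fun x => c%:E * f x)%E.
  exact: measurable_funeM.
rewrite -!ge0_integralZl ?lee_fin // -!ge0_integralD //.
all: try apply: ge0_le_integral => //.
all: try by [exact: mcf | do 2?apply: emeasurable_funD; exact: mcf].
all: by move=> x Dx; rewrite ?f0_ge ?adde_ge0 // ?cf_ge0.
Qed.

End Lincomb.

Lemma integral_itv_oo_segment {R : realType} (lo hi : R) (h k : R -> R) : 0 < lo ->
  (forall r, 0 < r -> ~~ (lo <= r <= hi) -> h r = 0) ->
  (forall r, lo <= r <= hi -> h r = k r) ->
  (\int[lebesgue_measure]_(r in `]0%R, +oo[) (h r)%:E
   = \int[lebesgue_measure]_(r in `[lo, hi]) (k r)%:E)%E.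
Proof.
move=> lo_gt0 h_out h_in; rewrite integral_mkcond [RHS]integral_mkcond.
apply: eq_integral => r _; rewrite /patch !mem_setE !in_itv /= andbT.
have [r0|r0] := ltP 0 r; case: ifPn => rI //.
- by rewrite h_in.
- by rewrite h_out.
- by case/andP: rI => /(lt_le_trans lo_gt0); rewrite ltNge r0.
Qed.

(* [K] only has to agree with [k] for [r > 0], so [k] may involve [1 / r]. *)
Lemma measurable_fun_integral_oo {R : realType} {d : measure_display}
    {Omega : measurableType d} (K : R * Omega -> R) (k : R -> Omega -> R) :
  measurable_fun [set: R * Omega] K ->
  (forall r w, 0 < r -> K (r, w) = k r w) ->
  (forall r w, 0 < r -> 0 <= k r w) ->
  measurable_fun [set: Omega]
    (fun w => \int[@lebesgue_measure R]_(r in `]0%R, +oo[) (k r w)%:E)%E.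
Proof.
move=> mK Kk k_ge0.
pose H p := \1_(`]0%R, +oo[ : set R) p.1 * K p.
have mH : measurable_fun [set: measurableTypeR R * Omega] (fun p => (H p)%:E).
  apply/measurable_EFinP/measurable_funM => //.
  exact: measurableT_comp (measurable_indic (measurable_itv _)) measurable_fst.
have H_ge0 p : (0 <= (H p)%:E)%E.
  case: p => r w; rewrite lee_fin /H indicE /= mem_setE in_itv /= andbT.
  by have [r0|_] := ltP 0 r; rewrite ?mul1r ?mul0r ?Kk ?k_ge0.
have := measurable_fun_fubini_tonelli_G (m1 := @lebesgue_measure R) _ mH H_ge0.
congr measurable_fun; apply/funext => w; rewrite [RHS]integral_mkcond.
apply: eq_integral => r _; rewrite /patch /H indicE /= mem_setE in_itv /= andbT.
by have [r0|_] := ltP 0 r; rewrite ?mul1r ?mul0r ?Kk.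
Qed.

Section RadialIntegral.
Context {R : realType} {d : measure_display} {Omega : measurableType d}.
Context {N : nat} {psi : R -> R}.
Hypothesis psi_cont : continuous psi.
Hypothesis psi_ge0 : forall r, 0 <= r -> 0 <= psi r.

Let weight_ge0 r : 0 < r -> 0 <= psi r ^+ N.-1.
Proof. by move=> r0; rewrite exprn_ge0 // psi_ge0 // ltW. Qed.

Lemma radial_integral_ge0 {z : R -> Omega -> R} :
  (forall r w, 0 < r -> 0 <= z r w) -> forall w, [set: Omega] w ->
  (0 <= \int[lebesgue_measure]_(r in `]0%R, +oo[) (z r w * psi r ^+ N.-1)%:E)%E.
Proof.
move=> z_ge0 w _; apply: integral_ge0 => r.
by rewrite /= in_itv /= andbT => r0; rewrite lee_fin mulr_ge0 ?z_ge0 ?weight_ge0.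
Qed.

Lemma measurable_radial_integral {Z : R * Omega -> R} {z : R -> Omega -> R} :
  measurable_fun [set: R * Omega] Z -> (forall r w, 0 < r -> Z (r, w) = z r w) ->
  (forall r w, 0 < r -> 0 <= z r w) ->
  measurable_fun [set: Omega]
    (fun w => \int[lebesgue_measure]_(r in `]0%R, +oo[) (z r w * psi r ^+ N.-1)%:E)%E.
Proof.
move=> mZ Zz z_ge0.
have mweight : measurable_fun [set: R * Omega] (fun p => psi p.1 ^+ N.-1).
  apply: measurable_funX; apply: measurableT_comp measurable_fst.
  exact: continuous_measurable_fun.
apply: (measurable_fun_integral_oo _ _ (measurable_funM mZ mweight)).
  by move=> r w r0; rewrite /= Zz.
by move=> r w r0; rewrite mulr_ge0 ?z_ge0 ?weight_ge0.
Qed.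

End RadialIntegral.

Section GroundState.
Context {R : realType}.
Variables (lo hi : R) (w g v w' g' v' : R -> R).
Hypothesis lo_lt_hi : lo < hi.
Hypothesis dw : forall x, lo <= x <= hi -> is_derive x 1 w (w' x).
Hypothesis dg : forall x, lo <= x <= hi -> is_derive x 1 g (g' x).
Hypothesis dv : forall x, lo <= x <= hi -> is_derive x 1 v (v' x).
Hypothesis cw' : forall x, lo <= x <= hi -> {for x, continuous w'}.
Hypothesis cg' : forall x, lo <= x <= hi -> {for x, continuous g'}.
Hypothesis cv' : forall x, lo <= x <= hi -> {for x, continuous v'}.
Hypothesis w_ge0 : forall x, lo <= x <= hi -> 0 <= w x.
Hypotheses (v_lo : v lo = 0) (v_hi : v hi = 0).

Let flux x := g x * w x * v x ^+ 2.
Let flux' x := (g' x * w x + g x * w' x) * v x ^+ 2 + 2 * g x * w x * v x * v' x.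

Let is_derive_flux x : lo <= x <= hi -> is_derive x 1 flux (flux' x).
Proof.
move=> hx.
have := is_deriveM (is_deriveM (dg x hx) (dw x hx)) (is_deriveX 2 (dv x hx)).
by move/is_derive_eq; apply; rewrite /flux' !fctE expr1 /GRing.scale /=; ring.
Qed.

Let continuous_flux' x : lo <= x <= hi -> {for x, continuous flux'}.
Proof.
move=> hx; have cw := is_derive1_continuous (dw x hx).
have cg := is_derive1_continuous (dg x hx).
have cv := is_derive1_continuous (dv x hx).
have := (cw' x hx, cg' x hx, cv' x hx, continuous_exprn 2 cv) => -[[[? ?] ?] ?].
apply: continuousD; apply: continuousM => //.
  by apply: continuousD; apply: continuousM.
do 3 apply: continuousM => //; exact: cst_continuous.
Qed.

Let integral_flux' : (\int[lebesgue_measure]_(x in `[lo, hi]) (flux' x)%:E = 0)%E.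
Proof.
have inI x : x \in `]lo, hi[ -> lo <= x <= hi.
  by rewrite in_itv => /andP[/ltW -> /ltW ->].
rewrite (@continuous_FTC2 _ _ flux _ _ lo_lt_hi).
- by rewrite /flux v_lo v_hi expr2 !mulr0 subee.
- by apply: continuous_subspace_itv => x; rewrite in_itv => /continuous_flux'.
- split.
  + by move=> x /inI/is_derive_flux-[].
  + apply/cvg_at_right_filter/(is_derive1_continuous (is_derive_flux lo _)).
    by rewrite lexx ltW.
  + apply/cvg_at_left_filter/(is_derive1_continuous (is_derive_flux hi _)).
    by rewrite lexx ltW.
- by move=> x /inI/is_derive_flux fx; rewrite derive1E derive_val.
Qed.

Lemma ground_state_inequality :
  (\int[lebesgue_measure]_(x in `[lo, hi])
      ((g' x * w x + g x * w' x - g x ^+ 2 * w x) * v x ^+ 2)%:E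
   <= \int[lebesgue_measure]_(x in `[lo, hi]) (v' x ^+ 2 * w x)%:E)%E.
Proof.
pose L x := v' x ^+ 2 * w x.
pose S x := w x * (v' x + g x * v x) ^+ 2.
pose P x := (g' x * w x + g x * w' x - g x ^+ 2 * w x) * v x ^+ 2.
have ctsLSP x : lo <= x <= hi ->
    [/\ {for x, continuous L}, {for x, continuous S} & {for x, continuous P}].
  move=> hx; have cw := is_derive1_continuous (dw x hx).
  have cg := is_derive1_continuous (dg x hx).
  have cv := is_derive1_continuous (dv x hx).
  have := (cw' x hx, cg' x hx, cv' x hx) => -[[? ?] ?].
  split; apply: continuousM => //; try exact: continuous_exprn.
  - by apply/continuous_exprn/continuousD => //; apply: continuousM.
  - apply: continuousB; last by apply: continuousM => //; exact: continuous_exprn.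
    by apply: continuousD; apply: continuousM.
have iL : lebesgue_measure.-integrable `[lo, hi] (EFin \o L).
  by apply: segment_continuous_integrable => x /ctsLSP[].
have iS : lebesgue_measure.-integrable `[lo, hi] (EFin \o S).
  by apply: segment_continuous_integrable => x /ctsLSP[].
have iP : lebesgue_measure.-integrable `[lo, hi] (EFin \o P).
  by apply: segment_continuous_integrable => x /ctsLSP[].
have iflux' := segment_continuous_integrable continuous_flux'.
have -> : (\int[lebesgue_measure]_(x in `[lo, hi]) (L x)%:E
    = \int[lebesgue_measure]_(x in `[lo, hi]) (S x + P x)%:E)%E.
  rewrite -[LHS]adde0 -integral_flux' -integralD //.
  by apply: eq_integral => x _; congr EFin; rewrite /L /S /P /flux'; ring.
rewrite (integralD _ iS iP) //= leeDr //.
apply: integral_ge0 => x; rewrite /= in_itv => /w_ge0 w0.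
by rewrite lee_fin mulr_ge0 // sqr_ge0.
Qed.

End GroundState.

Section GroundStateProfile.
Context {R : realType}.
Implicit Types (k a r : R).

Definition ground_state k a r := k * r `^ a - (2 * r)^-1.
Definition ground_state' k a r := k * a * r `^ (a - 1) + (2 * r ^+ 2)^-1.

Lemma is_derive_ground_state k a r : 0 < r ->
  is_derive r 1 (ground_state k a) (ground_state' k a r).
Proof.
move=> r0; have r2 : 2 * r != 0 by rewrite mulf_neq0 ?gt_eqF.
have := is_deriveB (is_deriveZ k (is_derive1_powR a r0))
  (is_deriveV r2 (is_deriveZ 2 (@is_derive_id _ _ r 1))).
move=> dg; apply: is_derive_eq dg _; rewrite -![_ *: _]/(_ * _).
by rewrite /ground_state'; field; rewrite gt_eqF.
Qed.

Lemma continuous_ground_state' k a r : 0 < r ->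
  {for r, continuous (ground_state' k a)}.
Proof.
move=> r0; apply: continuousD.
  by apply: continuousM; [exact: cst_continuous | exact: continuous_powR_gt0].
apply: continuousV; first by rewrite mulf_neq0 // expf_neq0 // gt_eqF.
by apply: continuousM; [exact: cst_continuous | exact: continuous_exprn cvg_id].
Qed.

(* The cross terms [k r^(a-1)] of [2 k r^a g] and [g^2] cancel. *)
Lemma ground_state_potentialE k a r (w : R) : 0 < r ->
  ground_state' k a r * w + ground_state k a r * (w * (2 * k * r `^ a))
    - ground_state k a r ^+ 2 * w
  = (k ^+ 2 * r `^ (2 * a) + (4 * r ^+ 2)^-1 + k * a * r `^ (a - 1)) * w.
Proof.
move=> r0; rewrite /ground_state /ground_state' (mulrC 2 a) powRrM.
by rewrite powR_mulrn ?powR_ge0 //; field; rewrite gt_eqF.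
Qed.

End GroundStateProfile.

Lemma is_derive_exp_weight {R : realType} (n : nat) (A b a r : R) : 0 < r ->
  is_derive r 1 (fun x => (A * expR (b * x `^ (a + 1))) ^+ n)
    ((A * expR (b * r `^ (a + 1))) ^+ n * (n%:R * b * (a + 1) * r `^ a)).
Proof.
move=> r0.
have := is_derive1_comp (is_derive_expR _)
  (is_deriveZ b (is_derive1_powR (a + 1) r0)).
move/(is_deriveZ A)/(is_deriveX n); rewrite exprfctE => dw.
apply: is_derive_eq dw _.
rewrite addrK -![_ *: _]/(_ * _); case: n => [|n]; first by rewrite !mul0r mulr0.
by rewrite exprS /=; ring.
Qed.

Section RadialHardy.
Context {R : realType}.
Variables (N : nat) (psi : R -> R) (RR A b a R' : R) (v : R -> R).
Hypotheses (N_gt0 : (0 < N)%N) (RR_gt0 : 0 < RR) (A_gt0 : 0 < A).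
Hypothesis psi_tail : forall r, RR <= r -> psi r = A * expR (b * r `^ (a + 1)).
Hypothesis v_derivable : forall r, 0 < r -> derivable v r 1.
Hypothesis v'_derivable : forall r, 0 < r -> derivable (derive1 v) r 1.
Hypothesis v_lt_RR : forall r, r < RR -> v r = 0.
Hypothesis v_gt_R' : forall r, R' < r -> v r = 0.

Let k := (N%:R - 1) * b * (a + 1) / 2.
Let weight r := (A * expR (b * r `^ (a + 1))) ^+ N.-1.
(* A segment of (0, +oo) containing the support [RR, R'] of [v] in its
   interior, so that [v] vanishes at both ends. *)
Let lo := RR / 2.
Let hi := Num.max R' RR + 1.

Let v_out r : r < RR \/ R' < r -> v r = 0.
Proof. by case=> [/v_lt_RR|/v_gt_R']. Qed.

Let derive1_v_out r : r < RR \/ R' < r -> derive1 v r = 0.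
Proof.
move=> r_out; rewrite derive1E (@near_eq_derive _ _ _ v (cst 0)) ?derive_cst //.
case: r_out => [rRR|R'r]; near=> x; apply: v_out.
- by left; near: x; exact: lt_nbhsl.
- by right; near: x; exact: lt_nbhsr.
Unshelve. all: by end_near.
Qed.

Let lo_gt0 : 0 < lo. Proof. by rewrite divr_gt0. Qed.
Let lo_lt_RR : lo < RR. Proof. by rewrite ltr_pdivrMr // ltr_pMr // ltr1n. Qed.
Let R'_lt_hi : R' < hi.
Proof. by rewrite (@le_lt_trans _ _ (Num.max R' RR)) ?ltrDl // le_max lexx. Qed.
Let RR_lt_hi : RR < hi.
Proof.
by rewrite (@le_lt_trans _ _ (Num.max R' RR)) ?ltrDl // le_max lexx orbT.
Qed.

Let integral_weight (z : R -> R) : (forall r, r < RR \/ R' < r -> z r = 0) ->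
  (\int[lebesgue_measure]_(r in `]0%R, +oo[) (z r * psi r ^+ N.-1)%:E
   = \int[lebesgue_measure]_(r in `[lo, hi]) (z r * weight r)%:E)%E.
Proof.
move=> z_out; apply: integral_itv_oo_segment => // r.
  move=> _; rewrite negb_and -!ltNge => /orP[rlo|hir]; rewrite z_out ?mul0r //.
    by left; exact: lt_trans lo_lt_RR.
  by right; exact: lt_trans hir.
move=> _; have [rRR|RRr] := ltP r RR; last by rewrite psi_tail.
by rewrite z_out ?mul0r //; left.
Qed.

Let is_derive_weight (r : R) : 0 < r ->
  is_derive r 1 weight (weight r * (2 * k * r `^ a)).
Proof.
move=> r0; apply: is_derive_eq (is_derive_exp_weight N.-1 A b a r r0) _.
have NE : (N.-1)%:R = N%:R - 1 :> R by rewrite -{2}(prednK N_gt0) mulrSr addrK.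
by rewrite NE /k /weight; field.
Qed.

Let is_derive_v (r : R) : 0 < r -> is_derive r 1 v (derive1 v r).
Proof. by move=> r0; rewrite derive1E; exact: derivableP (v_derivable _ r0). Qed.

Let continuous_v (r : R) : 0 < r -> {for r, continuous v}.
Proof. by move=> r0; have := is_derive1_continuous (is_derive_v r r0). Qed.

Let continuous_derive1_v (r : R) : 0 < r -> {for r, continuous (derive1 v)}.
Proof.
by move=> r0; have := is_derive1_continuous (derivableP (v'_derivable _ r0)).
Qed.

Let continuous_weight (r : R) : 0 < r -> {for r, continuous weight}.
Proof. by move=> r0; have := is_derive1_continuous (is_derive_weight r r0). Qed.

Let continuous_weight' (r : R) : 0 < r ->
  {for r, continuous (fun x => weight x * (2 * k * x `^ a))}.
Proof.
move=> r0; apply: continuousM; first exact: continuous_weight.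
by apply: continuousM; [exact: cst_continuous | exact: continuous_powR_gt0].
Qed.

Let weight_ge0 (r : R) : 0 < r -> 0 <= weight r.
Proof. by move=> _; rewrite exprn_ge0 // mulr_ge0 ?expR_ge0 // ltW. Qed.

Let on_segment {P : R -> Prop} : (forall r, 0 < r -> P r) ->
  forall r, lo <= r <= hi -> P r.
Proof. by move=> P_pos r /andP[lor _]; apply/P_pos/(lt_le_trans lo_gt0). Qed.

Let integrable_powR_weighted (c : R) :
  lebesgue_measure.-integrable `[lo, hi] (EFin \o fun r => r `^ c * v r ^+ 2 * weight r).
Proof.
apply: segment_continuous_integrable; apply: on_segment => r r0.
apply: continuousM; last exact: continuous_weight.
apply: continuousM; first exact: continuous_powR_gt0.
exact/continuous_exprn/continuous_v.
Qed.

Let integrable_hardy_weighted :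
  lebesgue_measure.-integrable `[lo, hi] (EFin \o fun r => v r ^+ 2 / r ^+ 2 * weight r).
Proof.
apply: segment_continuous_integrable; apply: on_segment => r r0.
apply: continuousM; last exact: continuous_weight.
apply: continuousM; first exact/continuous_exprn/continuous_v.
apply: continuousV; first by rewrite expf_neq0 // gt_eqF.
exact: continuous_exprn cvg_id.
Qed.

Lemma radial_hardy_inequality :
  (\int[lebesgue_measure]_(r in `]0%R, +oo[)
      ((derive1 v r ^+ 2) * psi r ^+ N.-1)%:E
   >= (((N%:R - 1) / 2) ^+ 2 * (a + 1) ^+ 2 * b ^+ 2)%:E
        * \int[lebesgue_measure]_(r in `]0%R, +oo[)
            ((r `^ (2 * a) * v r ^+ 2) * psi r ^+ N.-1)%:E
      + (1 / 4)%:E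
        * \int[lebesgue_measure]_(r in `]0%R, +oo[)
            ((v r ^+ 2 / r ^+ 2) * psi r ^+ N.-1)%:E
      + (2 * b * a * (a + 1) * (N%:R - 1) / 4)%:E
        * \int[lebesgue_measure]_(r in `]0%R, +oo[)
            ((r `^ (a - 1) * v r ^+ 2) * psi r ^+ N.-1)%:E)%E.
Proof.
rewrite !integral_weight; try by move=> r r_out;
  rewrite ?(v_out _ r_out) ?(derive1_v_out _ r_out) expr2 !(mul0r, mulr0).
rewrite -integral_lincomb3; [|by []|exact: integrable_powR_weighted
  |exact: integrable_hardy_weighted|exact: integrable_powR_weighted].
have := ground_state_inequality _ _ _ _ _ _ _ _ (lt_trans lo_lt_RR RR_lt_hi)
  (on_segment is_derive_weight) (on_segment (is_derive_ground_state k a))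
  (on_segment is_derive_v) (on_segment continuous_weight')
  (on_segment (continuous_ground_state' k a)) (on_segment continuous_derive1_v)
  (on_segment weight_ge0) (v_lt_RR _ lo_lt_RR) (v_gt_R' _ R'_lt_hi).
apply: le_trans; rewrite le_eqVlt; apply/orP; left; apply/eqP.
apply: eq_integral => r; rewrite inE /= in_itv /= => /andP[lor _].
have r0 := lt_le_trans lo_gt0 lor.
by congr EFin; rewrite ground_state_potentialE // /k; field; rewrite gt_eqF.
Qed.

End RadialHardy.

Theorem corollary3p1
  (R : realType) (N : nat) (hN : (3 <= N)%N)
  (psi : R -> R) (RR A b a : R)
  (hpsi_smooth : smooth_on psi setT)
  (hpsi_nonneg : forall r : R, 0 <= r -> 0 <= psi r)
  (hpsi_pos : forall r : R, 0 < r -> 0 < psi r)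
  (hpsi_d1 : derive1 psi 0 = 1)
  (hpsi_even : forall k : nat, derive1n (2 * k) psi 0 = 0)
  (hRR : 0 < RR) (hA : 0 < A) (hb : 0 < b) (ha : 0 <= a)
  (hpsi_tail : forall r : R, RR <= r -> psi r = A * expR (b * r `^ (a + 1)))
  (d : measure_display) (Omega : measurableType d)
  (sigma : {measure set Omega -> \bar R})
  (u : R -> Omega -> R)
  (hu_smooth : forall w : Omega, smooth_on (u^~ w) [set r | 0 < r])
  (hu_supp_in : forall (r : R) (w : Omega), r < RR -> u r w = 0)
  (hu_supp_cpt : exists R' : R, forall (r : R) (w : Omega), R' < r -> u r w = 0)
  (hu_meas : measurable_fun [set: R * Omega] (fun p : R * Omega => u p.1 p.2))
  (hdu_meas : measurable_fun [set: R * Omega]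
                (fun p : R * Omega => derive1 (u^~ p.2) p.1)) :
  (model_integral sigma N psi (fun r w => ((derive1 (u^~ w) r) ^+ 2)%R)
   >= ((((N%:R - 1) / 2) ^+ 2 * (a + 1) ^+ 2 * b ^+ 2)%R)%:E
        * model_integral sigma N psi (fun r w => (r `^ (2 * a) * u r w ^+ 2)%R)
      + ((1 / 4)%R)%:E
        * model_integral sigma N psi (fun r w => (u r w ^+ 2 / r ^+ 2)%R)
      + ((2 * b * a * (a + 1) * (N%:R - 1) / 4)%R)%:E
        * model_integral sigma N psi (fun r w => (r `^ (a - 1) * u r w ^+ 2)%R))%E.
Proof.
have [R' u_gt_R'] := hu_supp_cpt.
have psi_cont : continuous psi.
  by move=> r; have := is_derive1_continuous (derivableP (hpsi_smooth 0 r I)).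
have mpow c : measurable_fun [set: R * Omega] (fun p => p.1 `^ c).
  exact: measurableT_comp (measurable_powR c) measurable_fst.
have mu2 : measurable_fun [set: R * Omega] (fun p => u p.1 p.2 ^+ 2).
  exact: measurable_funX.
have N1_ge0 : 0 <= N%:R - 1 :> R by rewrite subr_ge0 ler1n (leq_trans _ hN).
apply: ge0_le_integral_lincomb3 => //.
- by do ?apply: mulr_ge0; rewrite ?invr_ge0 //; lra.
- by do ?apply: mulr_ge0; rewrite ?invr_ge0 //; lra.
- by apply: (radial_integral_ge0 hpsi_nonneg) => r w _;
    rewrite mulr_ge0 ?powR_ge0 ?sqr_ge0.
- by apply: (radial_integral_ge0 hpsi_nonneg) => r w _;
    rewrite mulr_ge0 ?invr_ge0 ?sqr_ge0.
- by apply: (radial_integral_ge0 hpsi_nonneg) => r w _;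
    rewrite mulr_ge0 ?powR_ge0 ?sqr_ge0.
- apply: (measurable_radial_integral psi_cont hpsi_nonneg
    (measurable_funX 2 hdu_meas)) => // r w _; exact: sqr_ge0.
- apply: (measurable_radial_integral psi_cont hpsi_nonneg
    (measurable_funM (mpow _) mu2)) => // r w _.
  by rewrite mulr_ge0 ?powR_ge0 ?sqr_ge0.
- apply: (measurable_radial_integral psi_cont hpsi_nonneg
    (measurable_funM mu2 (measurable_funX 2 (mpow (-1))))).
    by move=> r w r0; rewrite /= powR_inv1 ?ltW // exprVn.
  by move=> r w _; rewrite mulr_ge0 ?invr_ge0 ?sqr_ge0.
- apply: (measurable_radial_integral psi_cont hpsi_nonneg
    (measurable_funM (mpow _) mu2)) => // r w _.
  by rewrite mulr_ge0 ?powR_ge0 ?sqr_ge0.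
move=> w _; exact: (radial_hardy_inequality N psi RR A b a R' (u^~ w)
  (leq_trans _ hN) hRR hA hpsi_tail
  (fun r => hu_smooth w 0 r) (fun r => hu_smooth w 1 r)
  (fun r => hu_supp_in r w) (fun r => u_gt_R' r w)).
Qed.
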